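(* Let $A\in\mathbb{R}^{n\times n}$ be symmetric, $Z\in\mathbb{R}^{n\times k}$, $\alpha\in\{+1,-1\}$, $\beta\in\{+1,-1\}$, and suppose that both $A$ and $A+\alpha ZZ^{T}$ are positive definite. Let $V\in\mathbb{R}^{n\times k}$ be defined by $V=Z$ if $\beta=1$ and $V=A^{-1}Z(I_k+\alpha Z^{T}A^{-1}Z)^{-1/2}$ if $\beta=-1$, and for $\tilde{C}\in\mathbb{R}^{n\times n}$ let $R(\tilde{C})=VV^{T}-A^{\beta/2}\tilde{C}-\tilde{C}A^{\beta/2}-\alpha\beta\tilde{C}^{2}$. Let $\tilde{C}$ be a positive semidefinite matrix such that $A^{\beta/2}+\alpha\beta\tilde{C}$ is positive definite. Then \[ \|(A+\alpha ZZ^{T})^{\beta/2}-(A^{\beta/2}+\alpha\beta\tilde{C})\|_{F}\leq\left(n^{1/2}\|R(\tilde{C})\|_{F}\right)^{1/2}, \] \[ \|(A+\alpha ZZ^{T})^{\beta/2}-(A^{\beta/2}+\alpha\beta\tilde{C})\|_{2}\leq\min\left\{ \frac{\|R(\tilde{C})\|_{F}}{\sqrt{\lambda_{\min}((A+\alpha ZZ^{T})^{\beta})}},\left(n^{1/2}\|R(\tilde{C})\|_{F}\right)^{1/2}\right\}. \]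
   Context: For a symmetric positive definite matrix $M$, $M^{1/2}$ is its principal square root and $M^{-1/2}=(M^{1/2})^{-1}$; $M^{\beta/2},M^{\beta}$ are interpreted accordingly. $\|\cdot\|_F$ is the Frobenius norm, $\|\cdot\|_2$ the spectral norm, $\lambda_{\min}$ the smallest eigenvalue. *)

From HB Require Import structures.
From mathcomp Require Import all_boot all_order all_algebra.
From mathcomp Require Import boolp classical_sets reals.
Set Implicit Arguments. Unset Strict Implicit. Unset Printing Implicit Defensive.
Import Order.TTheory GRing.Theory Num.Theory.
Local Open Scope ring_scope.
Local Open Scope classical_set_scope.

Section MatDefs.
Variable R : realType.

Definition symmx n (M : 'M[R]_n) : Prop := M^T = M.

Definition posdef n (M : 'M[R]_n) : Prop :=
  symmx M /\ forall x : 'cV[R]_n, x != 0 -> 0 < (x^T *m M *m x) 0 0.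
Definition psd n (M : 'M[R]_n) : Prop :=
  symmx M /\ forall x : 'cV[R]_n, 0 <= (x^T *m M *m x) 0 0.

(* principal square root: the (unique) positive semidefinite S with S S = M
   (chosen classically; 0 if none exists, never used in that case) *)
Definition sqrtmx n (M : 'M[R]_n) : 'M[R]_n :=
  xget 0 [set S : 'M[R]_n | psd S /\ S *m S = M].

Definition halfpowmx n (b : R) (M : 'M[R]_n) : 'M[R]_n :=
  if b == 1 then sqrtmx M else invmx (sqrtmx M).

Definition powmx n (b : R) (M : 'M[R]_n) : 'M[R]_n :=
  if b == 1 then M else invmx M.

Definition frobenius m n (M : 'M[R]_(m, n)) : R :=
  Num.sqrt (\sum_i \sum_j M i j ^+ 2).

Definition vnorm2 n (x : 'cV[R]_n) : R := Num.sqrt (\sum_i x i 0 ^+ 2).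

Definition specnorm m n (M : 'M[R]_(m, n)) : R :=
  sup [set r : R | exists x : 'cV[R]_n, vnorm2 x = 1 /\ r = vnorm2 (M *m x)].

Definition lambda_min n (M : 'M[R]_n) : R := inf [set a : R | eigenvalue M a].

End MatDefs.

From HB Require Import structures.
From mathcomp Require Import all_boot all_order all_algebra.
From mathcomp Require Import boolp classical_sets reals.
From mathcomp Require Import complex.
From mathcomp Require Import ring lra.
Import Order.TTheory GRing.Theory Num.Theory.
Local Open Scope ring_scope.
Set Implicit Arguments. Unset Strict Implicit. Unset Printing Implicit Defensive.

(* With S := (A + alpha Z Z^T)^(beta/2) and X := A^(beta/2) + alpha beta Ct, both
   positive semidefinite, one has S^2 - X^2 = alpha beta R(Ct); for beta = -1 this is
   the Woodbury formula, which is where V comes from.  If q is a unit eigenvector of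
   the symmetric matrix S - X with eigenvalue mu, then
   q^T (S^2 - X^2) q = mu q^T (S + X) q, so both mu^2 and |mu| sqrt(lambda_min(S^2))
   are bounded by |q^T (S^2 - X^2) q|.  Summing the first bound over an orthonormal
   eigenbasis and applying Cauchy-Schwarz gives the Frobenius estimate, the second
   bound gives the first spectral estimate, and the other one follows from
   ||.||_2 <= ||.||_F.
   The real spectral theorem is obtained by Householder deflation, a real eigenvector
   of a symmetric matrix coming from the Hermitian spectral theorem over R[i]. *)

Section InnerProduct.
Variable R : realDomainType.
Implicit Types (n : nat) (a : R).

Definition dot n (x y : 'cV[R]_n) : R := (x^T *m y) 0 0.

Lemma dotE n (x y : 'cV[R]_n) : dot x y = \sum_i x i 0 * y i 0.
Proof. by rewrite /dot mxE; apply: eq_bigr => i _; rewrite mxE. Qed.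

Lemma dotC n (x y : 'cV[R]_n) : dot x y = dot y x.
Proof. by rewrite !dotE; apply: eq_bigr => i _; rewrite mulrC. Qed.

Lemma dotDl n (x y z : 'cV[R]_n) : dot (x + y) z = dot x z + dot y z.
Proof. by rewrite !dotE -big_split; apply: eq_bigr => i _; rewrite mxE mulrDl. Qed.

Lemma dotBl n (x y z : 'cV[R]_n) : dot (x - y) z = dot x z - dot y z.
Proof. by rewrite !dotE -sumrB; apply: eq_bigr => i _; rewrite !mxE mulrBl. Qed.

Lemma dotZl n a (x z : 'cV[R]_n) : dot (a *: x) z = a * dot x z.
Proof. by rewrite !dotE mulr_sumr; apply: eq_bigr => i _; rewrite !mxE mulrA. Qed.

Lemma dotDr n (x y z : 'cV[R]_n) : dot z (x + y) = dot z x + dot z y.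
Proof. by rewrite !(dotC z) dotDl. Qed.

Lemma dotBr n (x y z : 'cV[R]_n) : dot z (x - y) = dot z x - dot z y.
Proof. by rewrite !(dotC z) dotBl. Qed.

Lemma dotZr n a (x z : 'cV[R]_n) : dot z (a *: x) = a * dot z x.
Proof. by rewrite !(dotC z) dotZl. Qed.

Lemma dot_mulmxr m n (M : 'M[R]_(m, n)) (x : 'cV[R]_m) (y : 'cV[R]_n) :
  dot x (M *m y) = dot (M^T *m x) y.
Proof. by rewrite /dot trmx_mul trmxK mulmxA. Qed.

Lemma dot_ge0 n (x : 'cV[R]_n) : 0 <= dot x x.
Proof. by rewrite dotE sumr_ge0 // => i _; rewrite -expr2 sqr_ge0. Qed.

Lemma dot_eq0 n (x : 'cV[R]_n) : (dot x x == 0) = (x == 0).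
Proof.
apply/idP/eqP => [|->]; last by rewrite dotE big1 // => i _; rewrite mxE mul0r.
rewrite dotE psumr_eq0 => [/allP x0|i _]; last by rewrite -expr2 sqr_ge0.
apply/matrixP => i j; rewrite ord1 mxE; apply/eqP.
by rewrite -sqrf_eq0 expr2; apply: (implyP (x0 i (mem_index_enum _))).
Qed.

Lemma dot_gt0 n (x : 'cV[R]_n) : (0 < dot x x) = (x != 0).
Proof. by rewrite lt_def dot_ge0 dot_eq0 andbT. Qed.

Lemma mulmx_trdot m n (x : 'M[R]_(m, 1)) (y z : 'cV[R]_n) :
  x *m (y^T *m z) = dot y z *: x.
Proof.
have -> : y^T *m z = (dot y z)%:M by apply/matrixP => i j; rewrite !ord1 [RHS]mxE eqxx mulr1n.
exact: mul_mx_scalar.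
Qed.

Definition orthmx n (Q : 'M[R]_n) : Prop := Q^T *m Q = 1%:M.

Lemma orthmx_mulmx_tr n (Q : 'M[R]_n) : orthmx Q -> Q *m Q^T = 1%:M.
Proof. exact: mulmx1C. Qed.

Lemma orthmx_tr n (Q : 'M[R]_n) : orthmx Q -> orthmx Q^T.
Proof. by move=> Qo; rewrite /orthmx trmxK orthmx_mulmx_tr. Qed.

Lemma dot_orthmx n (Q : 'M[R]_n) x y : orthmx Q -> dot (Q *m x) (Q *m y) = dot x y.
Proof. by move=> Qo; rewrite dot_mulmxr mulmxA Qo mul1mx. Qed.

End InnerProduct.

Section RealSpectralTheorem.
Variable R : rcfType.
Implicit Types (n : nat) (a : R).

Let e0 n : 'cV[R]_n.+1 := delta_mx 0 0.

Lemma householder_reflection n (u : 'cV[R]_n.+1) : dot u u = 1 ->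
  exists H : 'M_n.+1, [/\ H^T = H, H *m H = 1%:M & H *m e0 n = u].
Proof.
move=> uu; set w := u - e0 n; set s := dot w w.
have [s0|sn0] := eqVneq s 0.
  exists 1%:M; split; rewrite ?trmx1 ?mul1mx //.
  by move/eqP: s0; rewrite dot_eq0 subr_eq0 => /eqP.
have e0e0 : dot (e0 n) (e0 n) = 1.
  by rewrite dotE (bigD1 0) //= big1 ?addr0 => [|i /negPf ni]; rewrite !mxE ?ni ?eqxx ?mulr1 ?mul0r.
have sE : s = 2 - 2 * dot u (e0 n).
  by rewrite /s /w !(dotBl, dotBr) uu e0e0 (dotC (e0 n)); ring.
have we0 : dot w (e0 n) = dot u (e0 n) - 1 by rewrite /w dotBl e0e0.
exists (1%:M - (2 / s) *: (w *m w^T)); split.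
- by rewrite linearB /= trmx1 linearZ /= trmx_mul trmxK.
- have ww : w *m w^T *m (w *m w^T) = s *: (w *m w^T).
    by rewrite mulmxA -[w *m w^T *m w]mulmxA mulmx_trdot -scalemxAl.
  rewrite mulmxBl mulmxBr mulmx1 mul1mx mulmxBr mulmx1 -scalemxAl -scalemxAr scalerA ww scalerA.
  have -> : 2 / s * (2 / s) * s = 2 / s + 2 / s by field.
  by rewrite scalerDl opprB addrA -addrA addrK subrK.
- rewrite mulmxBl mul1mx -scalemxAl -mulmxA mulmx_trdot we0 scalerA.
  have -> : 2 / s * (dot u (e0 n) - 1) = -1 by rewrite sE; field; rewrite -sE.
  by rewrite scaleN1r opprK /w addrC subrK.
Qed.

(* Over R[i] the matrix A is Hermitian, so its spectral diagonal is real. *)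
Lemma symmx_eigenvector n (A : 'M[R]_n.+1) : A^T = A ->
  exists a (v : 'cV_n.+1), v != 0 /\ A *m v = a *: v.
Proof.
move=> As; pose f := real_complex R; pose AC := map_mx f A.
have ACh : AC \is hermsymmx.
  rewrite is_hermitianmxE expr0 scale1r; apply/eqP/matrixP => i j.
  by rewrite !mxE -[in LHS]As mxE; apply/esym/conjc_real.
have /orthomx_spectralP ACE := hermitian_normalmx ACh.
set P := spectralmx AC in ACE; set d := spectral_diag AC in ACE.
have Pu : P \in unitmx by apply: spectral_unit.
have ev : eigenvalue AC (d 0 0).
  apply/eigenvalueP; exists (row 0 P).
    rewrite -row_mul {1}ACE !mulmxA mulmxV // mul1mx; apply/rowP => j.
    rewrite !mxE (bigD1 0) //= big1 ?addr0; first by rewrite !mxE eqxx mulr1n.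
    by move=> i /negPf ni; rewrite !mxE eq_sym ni mulr0n mul0r.
  apply/eqP => /(congr1 (mulmx^~ (invmx P))); rewrite -row_mul mulmxV // mul0mx.
  by move/rowP/(_ 0); rewrite !mxE eqxx /= => /eqP; rewrite oner_eq0.
have /RRe_real d0E : d 0 0 \is Num.real.
  by apply: (mxOverP (hermitian_spectral_diag_real ACh)).
move: ev; rewrite -d0E (eigenvalue_map f) => /eigenvalueP [v vA vn0].
exists (complex.Re (d 0 0)), v^T; split; first by rewrite trmx_eq0.
by rewrite -[A]As -trmx_mul vA linearZ.
Qed.

Let block1 n (Q : 'M[R]_n) : 'M[R]_(1 + n) := block_mx 1%:M 0 0 Q.

Let orthmx_block1 n (Q : 'M[R]_n) : orthmx Q -> orthmx (block1 Q).
Proof.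
move=> Qo; rewrite /orthmx /block1 tr_block_mx !trmx0 trmx1 mulmx_block.
by rewrite !mulmx0 !mul0mx !addr0 !add0r mulmx1 Qo -scalar_mx_block.
Qed.

Let block1_diag n a (Q : 'M[R]_n) (d : 'rV_n) :
  block1 Q *m diag_mx (row_mx a%:M d) *m (block1 Q)^T
  = block_mx a%:M 0 0 (Q *m diag_mx d *m Q^T).
Proof.
rewrite /block1 tr_block_mx !trmx0 trmx1 diag_mx_row.
have -> : diag_mx (a%:M : 'rV_1) = a%:M by apply/matrixP => i j; rewrite !ord1 !mxE.
by rewrite !mulmx_block !(mulmx0, mul0mx, addr0, add0r, mulmx1, mul1mx).
Qed.

(* A Householder reflection H sending e0 to a unit eigenvector of A makes H A H
   block diagonal, with blocks of sizes 1 and n. *)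
Theorem symmx_spectral n (A : 'M[R]_n) : A^T = A ->
  exists (Q : 'M_n) (d : 'rV_n), orthmx Q /\ A = Q *m diag_mx d *m Q^T.
Proof.
elim: n A => [|n IH] A As.
  by exists 1%:M, 0; split; [rewrite /orthmx mulmx1 trmx1 | apply/matrixP => [] []].
have [a [v [vn0 Av]]] := symmx_eigenvector As.
have vv : 0 < dot v v by rewrite dot_gt0.
set u := (Num.sqrt (dot v v))^-1 *: v.
have uu : dot u u = 1.
  by rewrite dotZl dotZr mulrA -expr2 exprVn sqr_sqrtr ?mulVf ?gt_eqF ?ltW.
have Au : A *m u = a *: u by rewrite /u -scalemxAr Av !scalerA mulrC.
have [H [Hs HH He]] := householder_reflection uu.
set B := H *m A *m H.
have Bs : B^T = B by rewrite /B !trmx_mul Hs As mulmxA.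
have Be : B *m e0 n = a *: e0 n.
  by rewrite /B -mulmxA He -mulmxA Au -scalemxAr -He mulmxA HH mul1mx.
have BHAH : B = H *m A *m H by [].
clearbody B.
(* Stated on nat indices so that it applies to both 'I_n.+1 and 'I_(1 + n). *)
have Bcol0 i j : nat_of_ord j = 0%N -> B i j = a * (nat_of_ord i == 0%N)%:R.
  move=> j0; have -> : j = 0 by apply/val_inj.
  have /matrixP/(_ i 0) := Be; rewrite !mxE (bigD1 0) //= big1 ?addr0.
    by rewrite !mxE eqxx mulr1 andbT.
  by move=> k /negPf nk; rewrite !mxE nk mulr0.
have BE : (B : 'M_(1 + n)) = block_mx a%:M 0 0 (drsubmx (B : 'M_(1 + n))).
  rewrite -[LHS](@submxK _ 1 n 1 n); congr block_mx; apply/matrixP => i j.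
  - by rewrite !ord1 !mxE Bcol0 // mulr1n mulr1.
  - by rewrite !ord1 !mxE -Bs mxE Bcol0 // mulr0.
  - by rewrite !ord1 !mxE Bcol0 // mulr0.
have A's : (drsubmx (B : 'M_(1 + n)))^T = drsubmx (B : 'M_(1 + n)) by rewrite trmx_drsub Bs.
have [Q' [d' [Q'o A'E]]] := IH _ A's.
exists (H *m block1 Q'), (row_mx a%:M d'); split.
  by rewrite /orthmx trmx_mul Hs mulmxA -[_ *m H *m H]mulmxA HH mulmx1 orthmx_block1.
rewrite trmx_mul Hs.
transitivity (H *m (block1 Q' *m diag_mx (row_mx a%:M d') *m (block1 Q')^T) *m H).
  by rewrite block1_diag -A'E -BE BHAH !mulmxA HH mul1mx -mulmxA HH mulmx1.
by rewrite !mulmxA.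
Qed.

End RealSpectralTheorem.

Section MatrixInverse.
Variable R : comUnitRingType.

Lemma invmx_uniq n (M N : 'M[R]_n) : M *m N = 1%:M -> invmx M = N.
Proof.
move=> MN; have [Mu _] := mulmx1_unit MN.
by rewrite -[invmx M]mulmx1 -MN mulmxA mulVmx // mul1mx.
Qed.

Lemma invmxM n (M N : 'M[R]_n) : M \in unitmx -> N \in unitmx ->
  invmx (M *m N) = invmx N *m invmx M.
Proof.
move=> Mu Nu; apply: invmx_uniq.
by rewrite mulmxA -[M *m N *m _]mulmxA mulmxV // mulmx1 mulmxV.
Qed.

Lemma woodbury n k (A : 'M[R]_n) (U : 'M[R]_(n, k)) (W : 'M[R]_(k, n)) a :
  A \in unitmx -> 1%:M + a *: (W *m invmx A *m U) \in unitmx ->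
  invmx (A + a *: (U *m W)) =
  invmx A - a *: (invmx A *m U *m invmx (1%:M + a *: (W *m invmx A *m U)) *m W *m invmx A).
Proof.
set K := 1%:M + _ => Au Ku; set N := invmx K; set Y := invmx A - _; apply: invmx_uniq.
have aWAU : a *: (W *m invmx A *m U) = K - 1%:M by rewrite /K addrC addKr.
have WY : W *m Y = N *m W *m invmx A.
  rewrite /Y mulmxBr -scalemxAr !mulmxA.
  have -> : a *: (W *m invmx A *m U *m N *m W *m invmx A)
          = (a *: (W *m invmx A *m U)) *m N *m W *m invmx A by rewrite !scalemxAl.
  by rewrite aWAU !mulmxBl mul1mx mulmxV // mul1mx opprB addrC subrK.
rewrite mulmxDl -scalemxAl -mulmxA WY /Y mulmxBr mulmxV // -scalemxAr !mulmxA mulmxV //.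
by rewrite mul1mx subrK.
Qed.

End MatrixInverse.

Section PositiveMatrices.
Variable R : realType.
Implicit Types (n : nat).

Lemma quadformE n (M : 'M[R]_n) x : (x^T *m M *m x) 0 0 = dot x (M *m x).
Proof. by rewrite /dot mulmxA. Qed.

Lemma psd_dot_ge0 n (M : 'M[R]_n) x : psd M -> 0 <= dot x (M *m x).
Proof. by case=> _ M0; rewrite -quadformE. Qed.

Lemma posdef_dot_gt0 n (M : 'M[R]_n) x : posdef M -> x != 0 -> 0 < dot x (M *m x).
Proof. by case=> _ M0 /M0; rewrite -quadformE. Qed.

Lemma posdef_psd n (M : 'M[R]_n) : posdef M -> psd M.
Proof.
case=> Ms M0; split => // x; have [->|xn0] := eqVneq x 0; first by rewrite mulmx0 mxE.
exact/ltW/M0.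
Qed.

Lemma posdef_unit n (M : 'M[R]_n) : posdef M -> M \in unitmx.
Proof.
move=> Mp; rewrite unitmxE unitfE; apply/negP => /det0P [v vn0 vM].
have Mv : M *m v^T = 0 by rewrite -(proj1 Mp) -trmx_mul vM trmx0.
have := posdef_dot_gt0 Mp (x := v^T); rewrite trmx_eq0 Mv => /(_ vn0).
by rewrite /dot mulmx0 mxE ltxx.
Qed.

Lemma posdef_inv n (M : 'M[R]_n) : posdef M -> posdef (invmx M).
Proof.
move=> Mp; have Mu := posdef_unit Mp; split; first by rewrite /symmx trmx_inv (proj1 Mp).
move=> x xn0; set y := invmx M *m x.
have xE : x = M *m y by rewrite /y mulKVmx.
have yn0 : y != 0 by apply: contra xn0 => /eqP y0; rewrite xE y0 mulmx0.
by rewrite quadformE -/y {1}xE dotC posdef_dot_gt0.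
Qed.

Lemma dot_diag_conj n (Q : 'M[R]_n) (d : 'rV[R]_n) x :
  dot x (Q *m diag_mx d *m Q^T *m x) = \sum_i d 0 i * (Q^T *m x) i 0 ^+ 2.
Proof.
rewrite -!mulmxA dot_mulmxr dotE; apply: eq_bigr => i _.
by rewrite mul_diag_mx [X in _ * X]mxE mulrCA -expr2.
Qed.

Lemma diag_conj_symmx n (Q : 'M[R]_n) d : symmx (Q *m diag_mx d *m Q^T).
Proof. by rewrite /symmx !trmx_mul trmxK tr_diag_mx mulmxA. Qed.

Lemma diag_conj_psd n (Q : 'M[R]_n) (d : 'rV[R]_n) :
  (forall i, 0 <= d 0 i) -> psd (Q *m diag_mx d *m Q^T).
Proof.
move=> d0; split => [|x]; first exact: diag_conj_symmx.
rewrite quadformE dot_diag_conj.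
by apply: sumr_ge0 => i _; rewrite mulr_ge0 ?sqr_ge0.
Qed.

Lemma diag_conjM n (Q : 'M[R]_n) (d e : 'rV[R]_n) : orthmx Q ->
  Q *m diag_mx d *m Q^T *m (Q *m diag_mx e *m Q^T)
  = Q *m diag_mx (\row_i (d 0 i * e 0 i)) *m Q^T.
Proof.
move=> Qo; rewrite -!mulmxA [Q^T *m (Q *m _)]mulmxA Qo mul1mx !mulmxA.
congr (_ *m _); rewrite -mulmxA; congr (_ *m _); apply/matrixP => i j.
by rewrite mul_diag_mx !mxE; case: eqVneq => _; rewrite ?mulr1n ?mulr0n ?mulr0.
Qed.

Lemma orthmx_col_neq0 n (Q : 'M[R]_n) i : orthmx Q -> col i Q != 0.
Proof.
move=> Qo; apply/eqP => /(congr1 (mulmx Q^T)); rewrite colE mulmxA Qo mul1mx mulmx0.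
by move/matrixP/(_ i 0); rewrite !mxE !eqxx /= => /eqP; rewrite oner_eq0.
Qed.

Lemma orthmx_col_unit n (Q : 'M[R]_n) i :
  orthmx Q -> dot (col i Q) (col i Q) = 1.
Proof.
move=> Qo; rewrite colE dot_orthmx // dotE (bigD1 i) //= big1 ?addr0.
  by rewrite !mxE !eqxx mulr1.
by move=> j /negPf nj; rewrite !mxE nj mulr0.
Qed.

Lemma diag_conj_col n (Q : 'M[R]_n) d i : orthmx Q ->
  Q *m diag_mx d *m Q^T *m (col i Q) = d 0 i *: (col i Q).
Proof.
move=> Qo; rewrite colE -!mulmxA [Q^T *m _]mulmxA Qo mul1mx scalemxAr; congr (_ *m _).
apply/matrixP => j k; rewrite ord1 mul_diag_mx !mxE eqxx andbT.
by case: eqVneq => [->|]; rewrite ?mulr1 ?mulr0.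
Qed.

Lemma dot_diag_conj_col n (Q : 'M[R]_n) d i : orthmx Q ->
  dot (col i Q) (Q *m diag_mx d *m Q^T *m (col i Q)) = d 0 i.
Proof. by move=> Qo; rewrite diag_conj_col // dotZr orthmx_col_unit // mulr1. Qed.

Lemma diag_conj_psd_ge0 n (M Q : 'M[R]_n) d : orthmx Q -> M = Q *m diag_mx d *m Q^T ->
  psd M -> forall i, 0 <= d 0 i.
Proof. by move=> Qo ME Mp i; rewrite -(dot_diag_conj_col d i Qo) -ME psd_dot_ge0. Qed.

Lemma diag_conj_posdef_gt0 n (M Q : 'M[R]_n) d : orthmx Q -> M = Q *m diag_mx d *m Q^T ->
  posdef M -> forall i, 0 < d 0 i.
Proof.
move=> Qo ME Mp i.
by rewrite -(dot_diag_conj_col d i Qo) -ME posdef_dot_gt0 // orthmx_col_neq0.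
Qed.

Lemma sqrtmx_spec n (M : 'M[R]_n) : psd M -> psd (sqrtmx M) /\ sqrtmx M *m sqrtmx M = M.
Proof.
move=> Mp; apply: (@xgetPex _ 0 [set S | psd S /\ S *m S = M]).
have [Q [d [Qo ME]]] := symmx_spectral (proj1 Mp).
have d0 := diag_conj_psd_ge0 Qo ME Mp.
exists (Q *m diag_mx (\row_i Num.sqrt (d 0 i)) *m Q^T); split.
  by apply: diag_conj_psd => i; rewrite mxE sqrtr_ge0.
rewrite diag_conjM // ME; congr (_ *m diag_mx _ *m _).
by apply/rowP => i; rewrite !mxE -expr2 sqr_sqrtr.
Qed.

(* With S = M^(1/2): x^T S x = |S^(1/2) x|^2 vanishes only if S^(1/2) x = 0,
   and then M x = S^(1/2) S^(1/2) S x = 0. *)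
Lemma sqrtmx_posdef n (M : 'M[R]_n) : posdef M -> posdef (sqrtmx M).
Proof.
move=> Mp; have [Sp SS] := sqrtmx_spec (posdef_psd Mp).
have [Tp TT] := sqrtmx_spec Sp.
split => [|x xn0]; first exact: (proj1 Sp).
rewrite quadformE lt_def psd_dot_ge0 // andbT; apply/eqP => Sx0.
have Tx : sqrtmx (sqrtmx M) *m x = 0.
  by apply/eqP; rewrite -dot_eq0 -{1}(proj1 Tp) -dot_mulmxr mulmxA TT Sx0.
have := posdef_dot_gt0 Mp xn0.
by rewrite -SS -TT -!mulmxA Tx !mulmx0 /dot mulmx0 mxE ltxx.
Qed.

Lemma invsqrtmx_sqr n (M : 'M[R]_n) : posdef M ->
  invmx (sqrtmx M) *m invmx (sqrtmx M) = invmx M.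
Proof.
move=> Mp; have Su := posdef_unit (sqrtmx_posdef Mp).
by rewrite -invmxM // (sqrtmx_spec (posdef_psd Mp)).2.
Qed.

Lemma powmx_posdef n b (M : 'M[R]_n) : posdef M -> posdef (powmx b M).
Proof. by rewrite /powmx; case: ifP => // _; apply: posdef_inv. Qed.

End PositiveMatrices.

Section SpectralBounds.
Variable R : realType.
Implicit Types (n : nat) (a c : R).
Local Open Scope classical_set_scope.

Lemma dot_self_orthmx n (Q : 'M[R]_n) (x : 'cV[R]_n) :
  orthmx Q -> dot x x = \sum_i (Q^T *m x) i 0 ^+ 2.
Proof.
move=> Qo; rewrite -(dot_orthmx _ _ (orthmx_tr Qo)) dotE.
by apply: eq_bigr => i _; rewrite expr2.
Qed.

Lemma dot_diag_conj_le n (Q : 'M[R]_n) (d : 'rV[R]_n) c (x : 'cV[R]_n) :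
  orthmx Q -> (forall i, d 0 i <= c) ->
  dot x (Q *m diag_mx d *m Q^T *m x) <= c * dot x x.
Proof.
move=> Qo dc; rewrite dot_diag_conj (dot_self_orthmx _ Qo) mulr_sumr.
by apply: ler_sum => i _; rewrite ler_wpM2r ?sqr_ge0.
Qed.

Lemma dot_diag_conj_ge n (Q : 'M[R]_n) (d : 'rV[R]_n) c (x : 'cV[R]_n) :
  orthmx Q -> (forall i, c <= d 0 i) ->
  c * dot x x <= dot x (Q *m diag_mx d *m Q^T *m x).
Proof.
move=> Qo cd; rewrite dot_diag_conj (dot_self_orthmx _ Qo) mulr_sumr.
by apply: ler_sum => i _; rewrite ler_wpM2r ?sqr_ge0.
Qed.

Lemma eigenvalue_diag_conj n (Q : 'M[R]_n) (t : 'rV[R]_n) a : orthmx Q ->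
  eigenvalue (Q *m diag_mx t *m Q^T) a -> exists i, t 0 i = a.
Proof.
move=> Qo /eigenvalueP [w wT wn0]; set y := w *m Q.
have yt : y *m diag_mx t = a *: y.
  by rewrite /y scalemxAl -wT -!mulmxA Qo mulmx1.
have yn0 : y != 0.
  apply: contraNneq wn0 => y0; apply/eqP.
  by rewrite -[w]mulmx1 -(orthmx_mulmx_tr Qo) mulmxA -/y y0 mul0mx.
clearbody y.
have /existsP [i yi] : [exists i, y 0 i != 0].
  apply: contraNT yn0 => /existsPn y0.
  by apply/eqP/rowP => i; rewrite mxE; apply/eqP/negPn/y0.
exists i; have /rowP/(_ i) := yt; rewrite mul_mx_diag !mxE mulrC.
exact: (mulIf yi).
Qed.

Lemma diag_conj_eigenvalue n (Q : 'M[R]_n) (t : 'rV[R]_n) i : orthmx Q ->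
  eigenvalue (Q *m diag_mx t *m Q^T) (t 0 i).
Proof.
move=> Qo; apply/eigenvalueP; exists (col i Q)^T; last by rewrite trmx_eq0 orthmx_col_neq0.
by rewrite -{1}(diag_conj_symmx Q t) -trmx_mul diag_conj_col // linearZ.
Qed.

Lemma lambda_min_le_diag_conj n (Q : 'M[R]_n) (t : 'rV[R]_n) i : orthmx Q ->
  lambda_min (Q *m diag_mx t *m Q^T) <= t 0 i.
Proof.
(* [inf] needs a lower bound: every eigenvalue is one of the t 0 j. *)
move=> Qo; apply: ge_inf; last exact: diag_conj_eigenvalue.
exists (\big[Num.min/t 0 i]_j t 0 j) => _ /= /(eigenvalue_diag_conj Qo) [j <-].
by rewrite (bigD1 j) //= ge_min lexx.
Qed.

Lemma lambda_min_gt0 n (T : 'M[R]_n) : (0 < n)%N -> posdef T -> 0 < lambda_min T.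
Proof.
move=> n0 Tp; have [Q [t [Qo TE]]] := symmx_spectral (proj1 Tp).
have t0 := diag_conj_posdef_gt0 Qo TE Tp.
set c := \big[Num.min/1]_i t 0 i.
have c0 : 0 < c by apply: (big_ind (fun x => 0 < x)) => // x y x0 y0; rewrite lt_min x0.
apply: (lt_le_trans c0); rewrite TE; apply: lb_le_inf.
  by exists (t 0 (Ordinal n0)); apply: diag_conj_eigenvalue.
by move=> _ /(eigenvalue_diag_conj Qo) [i <-]; rewrite /c (bigD1 i) //= ge_min lexx.
Qed.

Lemma sqrt_lambda_min_sqr_le n (S : 'M[R]_n) (q : 'cV[R]_n) : psd S -> dot q q = 1 ->
  Num.sqrt (lambda_min (S *m S)) <= dot q (S *m q).
Proof.
move=> Sp qq; have [P [s [Po SE]]] := symmx_spectral (proj1 Sp).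
have s0 := diag_conj_psd_ge0 Po SE Sp.
rewrite -[X in X <= _]mulr1 -qq SE; apply: dot_diag_conj_ge => // i.
rewrite -(ger0_norm (s0 i)) -sqrtr_sqr; apply: ler_wsqrtr.
rewrite diag_conjM // expr2.
by have := lambda_min_le_diag_conj (\row_j (s 0 j * s 0 j)) i Po; rewrite mxE.
Qed.

Lemma vnorm2E n (x : 'cV[R]_n) : vnorm2 x = Num.sqrt (dot x x).
Proof. by rewrite /vnorm2 dotE; under eq_bigr do rewrite expr2. Qed.

Lemma vnorm2_diag_conj_le n (Q : 'M[R]_n) (mu : 'rV[R]_n) c (x : 'cV[R]_n) :
  orthmx Q -> 0 <= c -> (forall i, `|mu 0 i| <= c) ->
  vnorm2 x = 1 -> vnorm2 (Q *m diag_mx mu *m Q^T *m x) <= c.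
Proof.
move=> Qo c0 muc; rewrite !vnorm2E => x1.
have xx : dot x x = 1 by rewrite -[LHS]sqr_sqrtr ?dot_ge0 // x1 expr1n.
rewrite -(ger0_norm c0) -sqrtr_sqr ler_wsqrtr // -{1}(diag_conj_symmx Q mu).
rewrite -dot_mulmxr mulmxA diag_conjM // -[X in _ <= X]mulr1 -xx.
apply: dot_diag_conj_le => // i.
by rewrite mxE -expr2 -real_normK ?num_real // lerXn2r ?nnegrE ?muc.
Qed.

Lemma specnorm_le m n (M : 'M[R]_(m, n)) c : 0 <= c ->
  (forall x, vnorm2 x = 1 -> vnorm2 (M *m x) <= c) -> specnorm M <= c.
Proof.
move=> c0 Mc; rewrite /specnorm; set S := [set r | _].
have [->|/set0P [r Sr]] := eqVneq S set0; first by rewrite sup0.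
by apply: ge_sup; [exists r | move=> _ [x [x1 ->]]; apply: Mc].
Qed.

End SpectralBounds.

Lemma sqr_sum_norm_le (R : realFieldType) n (c : 'I_n -> R) :
  (\sum_i `|c i|) ^+ 2 <= n%:R * \sum_i c i ^+ 2.
Proof.
pose a i := `|c i|; set S1 := \sum_i a i.
have -> : \sum_i c i ^+ 2 = \sum_i a i ^+ 2.
  by apply: eq_bigr => i _; rewrite /a real_normK ?num_real.
set S2 := \sum_i a i ^+ 2.
have sum_diag : \sum_i \sum_(j < n) a i ^+ 2 = n%:R * S2.
  by rewrite /S2 mulr_sumr; apply: eq_bigr => i _; rewrite sumr_const card_ord mulr_natl.
have sum_prod : \sum_i \sum_j 2 * (a i * a j) = 2 * S1 ^+ 2.
  rewrite expr2 /S1 mulr_suml mulr_sumr; apply: eq_bigr => i _; rewrite !mulr_sumr.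
  by apply: eq_bigr => j _; rewrite mulrA.
have cross : \sum_i \sum_j (a i - a j) ^+ 2 = 2 * (n%:R * S2) - 2 * S1 ^+ 2.
  under eq_bigr do under eq_bigr do rewrite sqrrB -mulr_natl.
  under eq_bigr do rewrite big_split sumrB /=.
  rewrite big_split sumrB /= sum_diag sum_prod sumr_const card_ord -/S2 -mulr_natl; ring.
have : 0 <= \sum_i \sum_j (a i - a j) ^+ 2.
  by apply: sumr_ge0 => i _; apply: sumr_ge0 => j _; rewrite sqr_ge0.
rewrite cross; lra.
Qed.

Section Frobenius.
Variable R : realType.

Lemma frobenius_ge0 m n (M : 'M[R]_(m, n)) : 0 <= frobenius M.
Proof. exact: sqrtr_ge0. Qed.

Lemma frobenius_sqr m n (M : 'M[R]_(m, n)) : frobenius M ^+ 2 = \sum_i \sum_j M i j ^+ 2.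
Proof.
by rewrite sqr_sqrtr // sumr_ge0 // => i _; rewrite sumr_ge0 // => j _; rewrite sqr_ge0.
Qed.

Lemma frobenius_trace m n (M : 'M[R]_(m, n)) : frobenius M = Num.sqrt (\tr (M^T *m M)).
Proof.
rewrite /frobenius exchange_big; congr Num.sqrt; apply: eq_bigr => j _.
by rewrite mxE; apply: eq_bigr => i _; rewrite mxE expr2.
Qed.

Lemma frobeniusZ m n a (M : 'M[R]_(m, n)) : frobenius (a *: M) = `|a| * frobenius M.
Proof.
rewrite /frobenius -sqrtr_sqr -sqrtrM ?sqr_ge0 // mulr_sumr; congr Num.sqrt.
by apply: eq_bigr => i _; rewrite mulr_sumr; apply: eq_bigr => j _; rewrite mxE exprMn.
Qed.

Lemma frobenius_orth_conj n (Q M : 'M[R]_n) :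
  orthmx Q -> frobenius (Q^T *m M *m Q) = frobenius M.
Proof.
move=> Qo; rewrite !frobenius_trace !trmx_mul trmxK !mulmxA.
rewrite -[_ *m Q *m Q^T]mulmxA (orthmx_mulmx_tr Qo) mulmx1 mxtrace_mulC !mulmxA.
by rewrite (orthmx_mulmx_tr Qo) mul1mx.
Qed.

Lemma frobenius_diag_sqr n (d : 'rV[R]_n) : frobenius (diag_mx d) ^+ 2 = \sum_i d 0 i ^+ 2.
Proof.
rewrite frobenius_sqr; apply: eq_bigr => i _; rewrite (bigD1 i) //= big1 ?addr0.
  by rewrite mxE eqxx mulr1n.
by move=> j /negPf nj; rewrite mxE eq_sym nj mulr0n expr0n.
Qed.

Lemma sum_diag_sqr_le_frobenius n (M : 'M[R]_n) : \sum_i M i i ^+ 2 <= frobenius M ^+ 2.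
Proof.
rewrite frobenius_sqr; apply: ler_sum => i _; rewrite (bigD1 i) //= lerDl.
by apply: sumr_ge0 => j _; rewrite sqr_ge0.
Qed.

Lemma dot_col_conj n (Q M : 'M[R]_n) i :
  dot (col i Q) (M *m col i Q) = (Q^T *m M *m Q) i i.
Proof.
have -> : (Q^T *m M *m Q) i i = (row i (col i (Q^T *m M *m Q))) 0 0 by rewrite !mxE.
by rewrite rowE colE !mulmxA -rowE -[_ *m Q *m _]mulmxA -colE -tr_col quadformE.
Qed.

Lemma abs_dot_col_le_frobenius n (Q M : 'M[R]_n) i : orthmx Q ->
  `|dot (col i Q) (M *m col i Q)| <= frobenius M.
Proof.
move=> Qo; rewrite -ler_sqr ?nnegrE ?frobenius_ge0 // real_normK ?num_real //.
rewrite -(frobenius_orth_conj M Qo) dot_col_conj.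
apply: le_trans (sum_diag_sqr_le_frobenius _).
by rewrite (bigD1 i) //= lerDl sumr_ge0 // => j _; rewrite sqr_ge0.
Qed.

Lemma specnorm_symmx_le_frobenius n (E : 'M[R]_n) : symmx E -> specnorm E <= frobenius E.
Proof.
move=> Es; have [Q [mu [Qo EE]]] := symmx_spectral Es.
apply: specnorm_le => [|x x1]; first exact: frobenius_ge0.
rewrite [in X in vnorm2 X]EE vnorm2_diag_conj_le ?frobenius_ge0 // => i.
by rewrite -(dot_diag_conj_col mu i Qo) -EE abs_dot_col_le_frobenius.
Qed.

Lemma sum_abs_dot_col_le n (Q M : 'M[R]_n) : orthmx Q ->
  \sum_i `|dot (col i Q) (M *m col i Q)| <= Num.sqrt n%:R * frobenius M.
Proof.
move=> Qo; rewrite -ler_sqr ?nnegrE ?mulr_ge0 ?sqrtr_ge0 ?frobenius_ge0 ?sumr_ge0 //.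
rewrite exprMn sqr_sqrtr // -(frobenius_orth_conj M Qo).
apply: le_trans (sqr_sum_norm_le _) _; rewrite ler_wpM2l //.
by under eq_bigr do rewrite dot_col_conj; apply: sum_diag_sqr_le_frobenius.
Qed.

End Frobenius.

Section SquareRootPerturbation.
Variable R : realType.
Variables (n : nat) (S X : 'M[R]_n).
Hypotheses (Sp : psd S) (Xp : psd X).

(* For an eigenvector q of S - X, q^T (S^2 - X^2) q = |Sq|^2 - |Xq|^2
   = <(S - X) q, (S + X) q>. *)
Lemma dot_sqr_sub_eigen q mu : (S - X) *m q = mu *: q ->
  dot q ((S *m S - X *m X) *m q) = mu * (dot q (S *m q) + dot q (X *m q)).
Proof.
move=> eig_q; have Sq_Xq : S *m q - X *m q = mu *: q by rewrite -mulmxBl.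
have SS : dot q (S *m (S *m q)) = dot (S *m q) (S *m q) by rewrite dot_mulmxr (proj1 Sp).
have XX : dot q (X *m (X *m q)) = dot (X *m q) (X *m q) by rewrite dot_mulmxr (proj1 Xp).
have -> : mu * (dot q (S *m q) + dot q (X *m q)) = dot (S *m q - X *m q) (S *m q + X *m q).
  by rewrite Sq_Xq dotZl dotDr.
rewrite mulmxBl dotBr -!mulmxA SS XX dotBl !dotDr [dot (X *m q) (S *m q)]dotC; ring.
Qed.

Lemma eigen_sqr_sub_bounds q mu : dot q q = 1 -> (S - X) *m q = mu *: q ->
  mu ^+ 2 <= `|dot q ((S *m S - X *m X) *m q)| /\
  `|mu| * dot q (S *m q) <= `|dot q ((S *m S - X *m X) *m q)|.
Proof.
move=> qq eig_q; rewrite (dot_sqr_sub_eigen eig_q).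
have s0 := psd_dot_ge0 q Sp; have x0 := psd_dot_ge0 q Xp.
have muE : mu = dot q (S *m q) - dot q (X *m q).
  by rewrite -dotBr -mulmxBl eig_q dotZr qq mulr1.
rewrite normrM (ger0_norm (addr_ge0 s0 x0)); split; last by rewrite ler_wpM2l // lerDl.
rewrite {1}muE; case: (lerP 0 (dot q (S *m q) - dot q (X *m q))) => h.
  by rewrite ger0_norm -?muE //; nra.
by rewrite ltr0_norm -?muE //; nra.
Qed.

Let SX_symmx : symmx (S - X).
Proof. by rewrite /symmx linearB /= (proj1 Sp) (proj1 Xp). Qed.

Lemma frobenius_sqrt_sub_le :
  frobenius (S - X) <= Num.sqrt (Num.sqrt n%:R * frobenius (S *m S - X *m X)).
Proof.
have [Q [mu [Qo EE]]] := symmx_spectral SX_symmx.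
rewrite -[frobenius _]ger0_norm ?frobenius_ge0 // -sqrtr_sqr ler_wsqrtr //.
rewrite -(frobenius_orth_conj _ Qo) EE !mulmxA Qo mul1mx -mulmxA Qo mulmx1.
rewrite frobenius_diag_sqr; apply: le_trans (sum_abs_dot_col_le _ Qo); apply: ler_sum => i _.
have eig_i : (S - X) *m col i Q = mu 0 i *: col i Q by rewrite EE diag_conj_col.
exact: (eigen_sqr_sub_bounds (orthmx_col_unit i Qo) eig_i).1.
Qed.

Lemma specnorm_sqrt_sub_le : posdef (S *m S) ->
  specnorm (S - X) <= frobenius (S *m S - X *m X) / Num.sqrt (lambda_min (S *m S)).
Proof.
move=> SSp; have [Q [mu [Qo EE]]] := symmx_spectral SX_symmx.
have bound0 : 0 <= frobenius (S *m S - X *m X) / Num.sqrt (lambda_min (S *m S)).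
  by rewrite divr_ge0 ?frobenius_ge0 ?sqrtr_ge0.
apply: specnorm_le => // x x1; rewrite [in X in vnorm2 X]EE vnorm2_diag_conj_le // => i.
have lam0 : 0 < lambda_min (S *m S).
  by apply: lambda_min_gt0 SSp; apply: leq_ltn_trans (ltn_ord i).
rewrite ler_pdivlMr ?sqrtr_gt0 //; apply: le_trans (abs_dot_col_le_frobenius _ _ Qo).
have eig_i : (S - X) *m col i Q = mu 0 i *: col i Q by rewrite EE diag_conj_col.
apply: le_trans (eigen_sqr_sub_bounds (orthmx_col_unit i Qo) eig_i).2.
by rewrite ler_wpM2l ?sqrt_lambda_min_sqr_le ?orthmx_col_unit.
Qed.

Theorem sqrt_sub_bounds : posdef (S *m S) ->
  frobenius (S - X) <= Num.sqrt (Num.sqrt n%:R * frobenius (S *m S - X *m X)) /\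
  specnorm (S - X) <=
    Num.min (frobenius (S *m S - X *m X) / Num.sqrt (lambda_min (S *m S)))
            (Num.sqrt (Num.sqrt n%:R * frobenius (S *m S - X *m X))).
Proof.
move=> SSp; split; first exact: frobenius_sqrt_sub_le.
rewrite le_min specnorm_sqrt_sub_le //=.
exact: le_trans (specnorm_symmx_le_frobenius SX_symmx) frobenius_sqrt_sub_le.
Qed.

End SquareRootPerturbation.

Lemma sqr_gap_identity (R : comPzRingType) n (A W P C : 'M[R]_n) g : P *m P = A ->
  (A + g *: W) - (P + g *: C) *m (P + g *: C)
  = g *: (W - P *m C - C *m P - g *: (C *m C)).
Proof.
move=> PP; rewrite mulmxDl !mulmxDr PP -!scalemxAl -!scalemxAr scalerA.
by rewrite !scalerBr scalerA !opprD !addrA [A + _ - A]addrAC subrr add0r.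
Qed.

Section LowRankUpdate.
Variable R : realType.
Variables (n k : nat) (A : 'M[R]_n) (Z : 'M[R]_(n, k)) (alpha : R).
Hypotheses (Ap : posdef A) (Bp : posdef (A + alpha *: (Z *m Z^T))).

Local Notation B := (A + alpha *: (Z *m Z^T)).
Local Notation K := (1%:M + alpha *: (Z^T *m invmx A *m Z)).
Local Notation V := (invmx A *m Z *m invmx (sqrtmx K)).

(* With y = A^-1 Z x and t = Z^T y: x^T K x = |x|^2 + alpha <x, t> with <x, t> = y^T A y,
   while B > 0 at y reads <x, t> + alpha |t|^2 > 0; conclude from |x + alpha t|^2 >= 0. *)
Lemma capacitance_posdef : posdef K.
Proof.
have Au := posdef_unit Ap.
split.
  by rewrite /symmx linearD /= trmx1 linearZ /= !trmx_mul trmxK trmx_inv (proj1 Ap) mulmxA.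
move=> x xn0; rewrite quadformE mulmxDl mul1mx dotDr -scalemxAl dotZr.
set y := invmx A *m (Z *m x).
have -> : Z^T *m invmx A *m Z *m x = Z^T *m y by rewrite /y !mulmxA.
set t := Z^T *m y.
have xt : dot x t = dot y (A *m y) by rewrite /t dot_mulmxr trmxK /y mulKVmx // dotC.
have xx : 0 < dot x x by rewrite dot_gt0.
have yAy := psd_dot_ge0 y (posdef_psd Ap).
have [y0|yn0] := eqVneq y 0.
  have /eqP dot00 : dot (0 : 'cV[R]_n) 0 == 0 by rewrite dot_eq0.
  by rewrite xt y0 mulmx0 dot00 mulr0 addr0.
have := posdef_dot_gt0 Bp yn0; rewrite mulmxDl dotDr -scalemxAl dotZr -mulmxA.
rewrite [dot y (Z *m _)]dot_mulmxr -/t -xt => Bt.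
have := dot_ge0 (x + alpha *: t); rewrite dotDl !dotDr !dotZl !dotZr (dotC t x).
nra.
Qed.

Lemma sqrtmx_update_gap (C : 'M[R]_n) :
  sqrtmx B *m sqrtmx B - (sqrtmx A + alpha *: C) *m (sqrtmx A + alpha *: C)
  = alpha *: (Z *m Z^T - sqrtmx A *m C - C *m sqrtmx A - alpha *: (C *m C)).
Proof.
rewrite (sqrtmx_spec (posdef_psd Bp)).2; apply: sqr_gap_identity.
exact: (sqrtmx_spec (posdef_psd Ap)).2.
Qed.

Lemma invsqrtmx_update_gap (C : 'M[R]_n) :
  invmx (sqrtmx B) *m invmx (sqrtmx B)
    - (invmx (sqrtmx A) + (- alpha) *: C) *m (invmx (sqrtmx A) + (- alpha) *: C)
  = (- alpha) *: (V *m V^T - invmx (sqrtmx A) *m C - C *m invmx (sqrtmx A)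
                  - (- alpha) *: (C *m C)).
Proof.
have Kp := capacitance_posdef.
have VV : V *m V^T = invmx A *m Z *m invmx K *m Z^T *m invmx A.
  rewrite !trmx_mul !trmx_inv (proj1 Ap) (proj1 (sqrtmx_spec (posdef_psd Kp)).1).
  by rewrite -(invsqrtmx_sqr Kp) !mulmxA.
rewrite invsqrtmx_sqr // woodbury ?posdef_unit // -VV -scaleNr.
exact/sqr_gap_identity/invsqrtmx_sqr.
Qed.

End LowRankUpdate.

Theorem corollary7 (R : realType) (n k : nat)
  (A : 'M[R]_n) (Z : 'M[R]_(n, k)) (alpha beta : R) (Ct : 'M[R]_n) :
  symmx A ->
  (alpha = 1 \/ alpha = -1) ->
  (beta = 1 \/ beta = -1) ->
  posdef A ->
  posdef (A + alpha *: (Z *m Z^T)) ->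
  psd Ct ->
  posdef (halfpowmx beta A + (alpha * beta) *: Ct) ->
  let V : 'M[R]_(n, k) :=
    if beta == 1 then Z
    else invmx A *m Z *m invmx (sqrtmx (1%:M + alpha *: (Z^T *m invmx A *m Z))) in
  let Res : 'M[R]_n :=
    V *m V^T - halfpowmx beta A *m Ct - Ct *m halfpowmx beta A
    - (alpha * beta) *: (Ct *m Ct) in
  let E : 'M[R]_n :=
    halfpowmx beta (A + alpha *: (Z *m Z^T)) - (halfpowmx beta A + (alpha * beta) *: Ct) in
  frobenius E <= Num.sqrt (Num.sqrt (n%:R) * frobenius Res) /\
  specnorm E <=
    Num.min (frobenius Res / Num.sqrt (lambda_min (powmx beta (A + alpha *: (Z *m Z^T)))))
            (Num.sqrt (Num.sqrt (n%:R) * frobenius Res)).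
Proof.
move=> _ alpha_sign beta_sign Ap Bp _ Xp V Res E.
have ab_sign : `|alpha * beta| = 1.
  by case: alpha_sign => ->; case: beta_sign => ->; rewrite ?(mul1r, mulN1r, normrN, normr1).
suff [S [X [Sp Xp' SSE EE DE]]] : exists S X : 'M[R]_n, [/\ psd S, psd X,
    S *m S = powmx beta (A + alpha *: (Z *m Z^T)), E = S - X
    & S *m S - X *m X = (alpha * beta) *: Res].
  have SSp : posdef (S *m S) by rewrite SSE; apply: powmx_posdef.
  have DRes : frobenius (S *m S - X *m X) = frobenius Res by rewrite DE frobeniusZ ab_sign mul1r.
  by rewrite EE -DRes -SSE; apply: sqrt_sub_bounds.
have Nb1 : (-1 == 1 :> R) = false by rewrite lt_eqF // (lt_trans (ltrN10 R) ltr01).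
rewrite /E /Res /V /halfpowmx /powmx in Xp *.
case: beta_sign => -> in Xp *; rewrite ?eqxx ?Nb1 ?mulr1 ?mulrN1 in Xp *.
- have [Sp SS] := sqrtmx_spec (posdef_psd Bp).
  exists (sqrtmx (A + alpha *: (Z *m Z^T))), (sqrtmx A + alpha *: Ct).
  by split => //; [apply: posdef_psd | apply: sqrtmx_update_gap].
- exists (invmx (sqrtmx (A + alpha *: (Z *m Z^T)))), (invmx (sqrtmx A) + (- alpha) *: Ct).
  split => //; first exact/posdef_psd/posdef_inv/sqrtmx_posdef.
  + exact: posdef_psd.
  + exact: invsqrtmx_sqr.
  + exact: invsqrtmx_update_gap.
Qed.
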